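(* Let $S$ be an $\mathcal{SOS}_q(n)$ with the property that, for any $n$-tuple $\mathbf{s}$, at most one of $\mathbf{s}$ and $-\mathbf{s}$ occurs in $S$ (as some $\mathbf{s}_n(i)$). Then $S$ and $-S=(-s_i)$ are s-disjoint.
   Context: For a periodic sequence $S=(s_i)$ over $\mathbb{Z}_q$ write $\mathbf{s}_n(i)=(s_i,\ldots,s_{i+n-1})$; for an $n$-tuple $\mathbf{u}=(u_0,\ldots,u_{n-1})$, $\mathbf{u}^R=(u_{n-1},\ldots,u_0)$ and $-\mathbf{u}=(-u_0,\ldots,-u_{n-1})$. A $q$-ary $n$-window sequence of period $m$ is a periodic sequence with $\mathbf{s}_n(i)=\mathbf{s}_n(j)\Rightarrow i\equiv j\pmod m$. An $\mathcal{SOS}_q(n)$ (special orientable sequence) is an $n$-window sequence with $\mathbf{s}_n(i)\neq\mathbf{s}_n(j)^R$ and $\mathbf{s}_n(i)\neq-\mathbf{s}_n(j)^R$ for all $i,j$. Two $n$-window sequences $S=(s_i)$, $T=(t_i)$ are s-disjoint if for all $i,j$: $\mathbf{s}_n(i)\neq\mathbf{t}_n(j)$, $\mathbf{s}_n(i)\neq\mathbf{t}_n(j)^R$, and $\mathbf{s}_n(i)\neq-\mathbf{t}_n(j)^R$. *)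

From mathcomp Require Import all_boot all_algebra.
Set Implicit Arguments. Unset Strict Implicit. Unset Printing Implicit Defensive.
Import GRing.Theory.
Local Open Scope ring_scope.

(* Periodic sequences over Z_q are modelled as functions nat -> 'Z_q
   (with the hypothesis 1 < q in the theorem). *)

Definition window (q : nat) (s : nat -> 'Z_q) (n i : nat) : seq 'Z_q :=
  mkseq (fun k => s (i + k)%N) n.

Definition negt (q : nat) (u : seq 'Z_q) : seq 'Z_q := map (fun x => - x) u.

Definition negs (q : nat) (s : nat -> 'Z_q) : nat -> 'Z_q := fun i => - s i.

Definition periodic (q : nat) (s : nat -> 'Z_q) (m : nat) : Prop :=
  (0 < m)%N /\ forall i, s (i + m)%N = s i.

Definition n_window (q : nat) (s : nat -> 'Z_q) (n m : nat) : Prop :=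
  periodic s m /\
  forall i j, window s n i = window s n j -> i = j %[mod m].

Definition SOS (q : nat) (s : nat -> 'Z_q) (n m : nat) : Prop :=
  n_window s n m /\
  forall i j, window s n i <> rev (window s n j) /\
              window s n i <> negt (rev (window s n j)).

Definition s_disjoint (q : nat) (s t : nat -> 'Z_q) (n m1 m2 : nat) : Prop :=
  n_window s n m1 /\ n_window t n m2 /\
  forall i j, [/\ window s n i <> window t n j,
                  window s n i <> rev (window t n j) &
                  window s n i <> negt (rev (window t n j))].

From mathcomp Require Import all_boot all_algebra.
Import GRing.Theory.

(* A window of S equal to a window of -S is
   a tuple occurring in S together with its negative, which is excluded; the
   other two s-disjointness conditions for -S are, after pulling the negation
   through the reversal, exactly the two orientability conditions of S. *)

Lemma negtK (q : nat) : involutive (@negt q).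
Proof. exact: mapK opprK. Qed.

Lemma negt_rev (q : nat) (u : seq 'Z_q) : negt (rev u) = rev (negt u).
Proof. exact: map_rev. Qed.

Lemma window_negs (q : nat) (s : nat -> 'Z_q) (n i : nat) :
  window (negs s) n i = negt (window s n i).
Proof. by rewrite /window /negt /mkseq -map_comp. Qed.

Lemma periodic_negs (q : nat) (s : nat -> 'Z_q) (m : nat) :
  periodic s m -> periodic (negs s) m.
Proof. by case=> m_gt0 per; split=> // i; rewrite /negs per. Qed.

Lemma n_window_negs (q : nat) (s : nat -> 'Z_q) (n m : nat) :
  n_window s n m -> n_window (negs s) n m.
Proof.
case=> per inj; split=> [|i j]; first exact: periodic_negs.
by rewrite !window_negs => /(can_inj (@negtK q)); apply: inj.
Qed.

Theorem theorem3p5 (q n m : nat) (s : nat -> 'Z_q) :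
  (1 < q)%N ->
  SOS s n m ->
  (forall u : seq 'Z_q, size u = n ->
     ~ ((exists i, window s n i = u) /\ (exists j, window s n j = negt u))) ->
  s_disjoint s (negs s) n m m.
Proof.
move=> _ [win orient] no_neg_pair.
split=> //; split; first exact: n_window_negs.
move=> i j; have [not_rev not_neg_rev] := orient i j.
rewrite window_negs -negt_rev negtK; split=> // eq_neg.
apply: (no_neg_pair (window s n i)); first by rewrite size_mkseq.
by split; [exists i | exists j; rewrite eq_neg negtK].
Qed.
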